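(* Let $G=K_{n_1,n_2,\dots,n_k}$ be a complete $k$-partite graph with $n_i\geq 1$ for all $i$. Then $\eta(G)$ equals $k$ plus the maximum size of a matching in the complete multipartite graph $K_{n_1-1,n_2-1,\dots,n_k-1}$.
   Context: All graphs are finite, simple and undirected. $K_{n_1,\dots,n_k}$ is the graph whose vertex set is partitioned into $k$ classes of sizes $n_1,\dots,n_k$ (classes may be empty), with two vertices adjacent if and only if they lie in different classes. A graph $H$ is a minor of $G$ if $H$ can be obtained from a subgraph of $G$ by contracting edges. The Hadwiger number $\eta(G)$ is the largest $t$ such that the complete graph $K_t$ is a minor of $G$. A matching is a set of pairwise disjoint edges. *)

From mathcomp Require Import all_boot.
Set Implicit Arguments. Unset Strict Implicit. Unset Printing Implicit Defensive.

Definition simple_graph (T : finType) (e : rel T) : Prop :=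
  irreflexive e /\ symmetric e.

Definition connected_in (T : finType) (e : rel T) (A : {set T}) : Prop :=
  forall x y, x \in A -> y \in A ->
    connect [rel u v | [&& e u v, u \in A & v \in A]] x y.

(* H = (T', e') is a minor of G = (T, e): there is a minor model, i.e. a
   family of pairwise disjoint, nonempty, connected branch sets indexed by the
   vertices of H, with an edge of G between the branch sets of adjacent
   vertices of H.  (Equivalent to: H is obtained from a subgraph of G by
   contracting edges.) *)
Definition is_minor (T' : finType) (e' : rel T') (T : finType) (e : rel T)
  : Prop :=
  exists f : T' -> {set T},
    [/\ forall a, f a != set0,
        forall a, connected_in e (f a),
        forall a b, a != b -> [disjoint f a & f b] &
        forall a b, e' a b -> exists x y, [/\ x \in f a, y \in f b & e x y]].

Definition complete_rel (t : nat) : rel 'I_t := fun i j => i != j.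

Definition has_K_minor (T : finType) (e : rel T) (t : nat) : Prop :=
  is_minor (@complete_rel t) e.

Definition hadwiger_number (T : finType) (e : rel T) (h : nat) : Prop :=
  has_K_minor e h /\ forall t, has_K_minor e t -> t <= h.

Definition is_matching (T : finType) (e : rel T) (M : {set {set T}}) : bool :=
  [forall A in M, exists x, exists y, (A == [set x; y]) && e x y] &&
  [forall A in M, forall B in M, (A != B) ==> [disjoint A & B]].

Definition matching_number (T : finType) (e : rel T) : nat :=
  \max_(M : {set {set T}} | is_matching e M) #|M|.

(* The complete multipartite graph K_{n_0,...,n_{k-1}}: vertices are pairs
   (i, j) with i < k (the class) and j < n i; two vertices are adjacent iff
   they lie in different classes. *)
Definition cmp_vert (k : nat) (n : 'I_k -> nat) : finType :=
  {i : 'I_k & 'I_(n i)}.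

Definition cmp_rel (k : nat) (n : 'I_k -> nat) : rel (cmp_vert n) :=
  fun u v => tag u != tag v.

From mathcomp Require Import all_boot.
Set Implicit Arguments. Unset Strict Implicit. Unset Printing Implicit Defensive.

(* Choose a root vertex in every class.  Deleting the roots leaves a copy of
   K_{n_1-1,...,n_k-1}.  Lower bound: the k roots as singleton branch sets,
   together with the edges of a maximum matching of that copy, form a
   K_t-minor model.  Upper bound: given a K_t-minor model, choose the root of a
   class to be a singleton branch set whenever one lies in that class.  At most
   k branch sets contain a root; any other branch set cannot be a singleton
   (two singletons of one class are non-adjacent), so being connected it
   contains an edge avoiding the roots, and these edges form a matching. *)

Section SimpleGraph.
Variables (T : finType) (e : rel T).

Lemma matching_edge M X : is_matching e M -> X \in M ->
  exists x y, X = [set x; y] /\ e x y.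
Proof.
case/andP=> /forall_inP edgeM _ /edgeM /existsP [x /existsP [y /andP [/eqP -> exy]]].
by exists x, y.
Qed.

Lemma matching_disjoint M X Y : is_matching e M -> X \in M -> Y \in M ->
  X != Y -> [disjoint X & Y].
Proof. by case/andP=> _ /forall_inP disjM /disjM /forall_inP dXM /dXM /implyP. Qed.

Lemma matching_number_max M : is_matching e M -> #|M| <= matching_number e.
Proof. by move=> matchM; apply: (@leq_bigmax_cond _ (fun M => is_matching e M)). Qed.

Lemma matching_number_attained :
  exists2 M, is_matching e M & #|M| = matching_number e.
Proof.
have matching0 : is_matching e set0.
  by apply/andP; split; apply/forall_inP => ?; rewrite inE.
have [|M matchM max_M] := @eq_bigmax_cond _ (fun M => is_matching e M) (fun M => #|M|).
  by apply/card_gt0P; exists set0.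
by exists M; rewrite // /matching_number -max_M.
Qed.

Lemma card_le_matching_number (I : finType) (A : {set I}) (P : I -> {set T}) :
  (forall a, a \in A -> exists x y, P a = [set x; y] /\ e x y) ->
  (forall a b, a \in A -> b \in A -> a != b -> [disjoint P a & P b]) ->
  #|A| <= matching_number e.
Proof.
move=> edgeP disjP.
have injP : {in A &, injective P}.
  move=> a b aA bA Pab; apply/eqP; apply: contraT => neq_ab.
  have [x [y [Pb _]]] := edgeP b bA.
  have xPb : x \in P b by rewrite Pb set21.
  by have := disjP a b aA bA neq_ab; rewrite Pab => /disjointFr/(_ xPb); rewrite xPb.
rewrite -(card_in_imset injP); apply: matching_number_max; apply/andP; split.
  apply/forall_inP => _ /imsetP [a aA ->].
  have [x [y [-> exy]]] := edgeP a aA.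
  by apply/existsP; exists x; apply/existsP; exists y; rewrite eqxx.
apply/forall_inP => _ /imsetP [a aA ->]; apply/forall_inP => _ /imsetP [b bA ->].
by apply/implyP => neq_Pab; apply: disjP => //; apply: contraNneq neq_Pab => ->.
Qed.

Lemma connected_in_set1 x : connected_in e [set x].
Proof. by move=> u v; rewrite !inE => /eqP -> /eqP ->; apply: connect0. Qed.

Lemma connected_in_set2 x y : symmetric e -> e x y -> connected_in e [set x; y].
Proof.
move=> sym_e exy u v; rewrite !inE.
by move=> /orP [] /eqP -> /orP [] /eqP ->; rewrite ?connect0 //;
  apply: connect1; rewrite /= !inE !eqxx ?orbT ?andbT // sym_e.
Qed.

Lemma connected_in_edge A : connected_in e A -> 1 < #|A| ->
  exists x y, [/\ x \in A, y \in A & e x y].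
Proof.
move=> connA /card_gt1P [x [y [xA yA neq_xy]]].
case/connectP: (connA x y xA yA) => [[_ eq_yx | z p /= /andP [/and3P [exz _ zA] _] _]].
  by rewrite eq_yx eqxx in neq_xy.
by exists x, z.
Qed.

End SimpleGraph.

Lemma cmp_rel_sym (k : nat) (n : 'I_k -> nat) : symmetric (@cmp_rel k n).
Proof. by move=> u v; rewrite /cmp_rel eq_sym. Qed.

Lemma cmp_rel_to_edge (k : nat) (n : 'I_k -> nat) (X Y : {set cmp_vert n}) x y y' :
  x \in X -> y \in Y -> y' \in Y -> tag y != tag y' ->
  exists u v, [/\ u \in X, v \in Y & cmp_rel u v].
Proof.
move=> xX yY y'Y neq_yy'; have [eq_xy | neq_xy] := eqVneq (tag x) (tag y).
  by exists x, y'; rewrite /cmp_rel eq_xy.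
by exists x, y.
Qed.

Lemma cmp_rel_from_edge (k : nat) (n : 'I_k -> nat) (X Y : {set cmp_vert n}) x x' y :
  x \in X -> x' \in X -> tag x != tag x' -> y \in Y ->
  exists u v, [/\ u \in X, v \in Y & cmp_rel u v].
Proof.
move=> xX x'X neq_xx' yY.
have [u [v [uY vX euv]]] := cmp_rel_to_edge yY xX x'X neq_xx'.
by exists v, u; rewrite cmp_rel_sym.
Qed.

Section RootedClasses.
Variables (k : nat) (n : 'I_k -> nat) (root : forall i, 'I_(n i)).

Definition root_vert i : cmp_vert n := Tagged (fun i => 'I_(n i)) (root i).

Definition lift_vert (u : cmp_vert (fun i => (n i).-1)) : cmp_vert n :=
  Tagged (fun i => 'I_(n i)) (lift (root (tag u)) (tagged u)).

Lemma lift_vert_inj : injective lift_vert.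
Proof.
case=> i x [j y] eq_xy; have eq_ij : i = j by have := congr1 tag eq_xy.
by subst j; have /= /lift_inj -> := eq_from_Tagged eq_xy.
Qed.

Lemma lift_vert_neq_root u : lift_vert u != root_vert (tag u).
Proof. by rewrite eq_Tagged eq_sym neq_lift. Qed.

Lemma lift_vertP v : v != root_vert (tag v) -> exists u, lift_vert u = v.
Proof.
case: v => i j; rewrite eq_Tagged /=.
case: (unliftP (root i) j) => [j' -> _ | ->]; last by rewrite eqxx.
by exists (Tagged (fun i => 'I_((n i).-1)) j').
Qed.

Lemma root_lift_disjoint i (X : {set cmp_vert (fun i => (n i).-1)}) :
  [disjoint [set root_vert i] & lift_vert @: X].
Proof.
rewrite disjoints1; apply/imsetP => [[u _ eq_root]].
have /= tag_u := congr1 tag eq_root.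
by have := lift_vert_neq_root u; rewrite -eq_root -tag_u eqxx.
Qed.

End RootedClasses.

Section MatchingModel.
Variables (k : nat) (n : 'I_k -> nat) (root : forall i, 'I_(n i)).
Variable M : {set {set cmp_vert (fun i => (n i).-1)}}.
Hypothesis matchM : is_matching (@cmp_rel k (fun i => (n i).-1)) M.

Definition matching_model (a : 'I_(k + #|M|)) : {set cmp_vert n} :=
  match split a with
  | inl i => [set root_vert root i]
  | inr j => lift_vert root @: enum_val j
  end.

Lemma lifted_matching_edge (j : 'I_#|M|) :
  exists x y, lift_vert root @: enum_val j = [set x; y] /\ cmp_rel x y.
Proof.
have [x [y [-> exy]]] := matching_edge matchM (enum_valP j).
by exists (lift_vert root x), (lift_vert root y); rewrite imsetU1 imset_set1.
Qed.

Lemma matching_model_K_minor : has_K_minor (@cmp_rel k n) (k + #|M|).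
Proof.
have split_inj : injective (@split k #|M|) := can_inj (@splitK _ _).
exists matching_model; split=> [a | a | a b | a b]; rewrite /matching_model.
- case: split => [i | j]; apply/set0Pn; first by exists (root_vert root i); rewrite inE.
  by have [x [y [-> _]]] := lifted_matching_edge j; exists x; rewrite !inE eqxx.
- case: split => [i | j]; first exact: connected_in_set1.
  have [x [y [-> exy]]] := lifted_matching_edge j.
  exact: connected_in_set2 (@cmp_rel_sym _ _) exy.
- rewrite -(inj_eq split_inj).
  case: (split a) => [i | j]; case: (split b) => [i' | j'] neq_ab.
  + by rewrite disjoints1 inE; apply: contraNneq neq_ab => /(congr1 tag)/= ->.
  + exact: root_lift_disjoint.
  + by rewrite disjoint_sym root_lift_disjoint.
  + rewrite imset_disjoint; last exact: lift_vert_inj.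
    apply: matching_disjoint matchM (enum_valP j) (enum_valP j') _.
    by apply: contraNneq neq_ab => /enum_val_inj ->.
- rewrite /complete_rel -(inj_eq split_inj).
  case: (split a) => [i | j]; case: (split b) => [i' | j'] neq_ab.
  + by exists (root_vert root i), (root_vert root i'); rewrite !inE !eqxx.
  + have [x [y [-> exy]]] := lifted_matching_edge j'.
    by apply: (@cmp_rel_to_edge _ _ _ _ (root_vert root i) x y); rewrite ?inE ?eqxx ?orbT.
  + have [x [y [-> exy]]] := lifted_matching_edge j.
    by apply: (@cmp_rel_from_edge _ _ _ _ x y (root_vert root i')); rewrite ?inE ?eqxx ?orbT.
  + have [x [y [-> _]]] := lifted_matching_edge j.
    have [x' [y' [-> exy']]] := lifted_matching_edge j'.
    by apply: (@cmp_rel_to_edge _ _ _ _ x x' y'); rewrite ?inE ?eqxx ?orbT.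
Qed.

End MatchingModel.

Section ModelBound.
Variables (k : nat) (n : 'I_k -> nat).
Hypothesis n_gt0 : forall i, 0 < n i.
Variables (t : nat) (f : 'I_t -> {set cmp_vert n}).
Hypothesis f_neq0 : forall a, f a != set0.
Hypothesis f_connected : forall a, connected_in (@cmp_rel k n) (f a).
Hypothesis f_disjoint : forall a b, a != b -> [disjoint f a & f b].
Hypothesis f_adjacent : forall a b, complete_rel a b ->
  exists x y, [/\ x \in f a, y \in f b & cmp_rel x y].

Definition model_root i : 'I_(n i) :=
  odflt (Ordinal (n_gt0 i))
    [pick j | [exists a, f a == [set Tagged (fun i => 'I_(n i)) j]]].

Definition rooted : {set 'I_t} :=
  [set a | [exists i, root_vert model_root i \in f a]].

Lemma model_mem_inj a b x : x \in f a -> x \in f b -> a = b.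
Proof.
move=> xa xb; apply/eqP; apply: contraT => /f_disjoint/disjointFr/(_ xa).
by rewrite xb.
Qed.

Lemma card_rooted : #|rooted| <= k.
Proof.
have [-> | [a0]] := set_0Vmem rooted; first by rewrite cards0.
rewrite inE => /existsP [i0 _].
pose cls a := odflt i0 [pick i | root_vert model_root i \in f a].
have cls_root a : a \in rooted -> root_vert model_root (cls a) \in f a.
  rewrite inE => /existsP [i root_i]; rewrite /cls.
  by case: pickP => [// | /(_ i)]; rewrite root_i.
have cls_inj : {in rooted &, injective cls}.
  move=> a b aR bR eq_ab; apply: (model_mem_inj (cls_root a aR)).
  by rewrite eq_ab; apply: cls_root.
by rewrite -(card_in_imset cls_inj) (leq_trans (max_card _)) ?card_ord.
Qed.

Lemma model_rootP a x : f a = [set x] ->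
  exists b, f b = [set root_vert model_root (tag x)].
Proof.
case: x => i j fa; rewrite /root_vert /model_root /=.
case: pickP => [j' /existsP [b /eqP fb] | /(_ j)]; first by exists b.
by have -> // : [exists a, f a == [set Tagged (fun i => 'I_(n i)) j]];
  apply/existsP; exists a; rewrite fa.
Qed.

Lemma unrooted_card_gt1 a : a \notin rooted -> 1 < #|f a|.
Proof.
move=> aR; rewrite ltn_neqAle eq_sym card_gt0 f_neq0 andbT.
apply: contra aR => /cards1P [x fa]; have [b fb] := model_rootP fa.
have [<- | neq_ab] := eqVneq b a.
  by rewrite inE; apply/existsP; exists (tag x); rewrite fb set11.
have [u [v []]] := f_adjacent neq_ab; rewrite fa fb !inE => /eqP -> /eqP ->.
by rewrite /cmp_rel eqxx.
Qed.

Lemma unrooted_lift a v : a \notin rooted -> v \in f a ->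
  exists u, lift_vert model_root u = v.
Proof.
move=> aR va; apply: lift_vertP; apply: contra aR => /eqP eq_v.
by rewrite inE; apply/existsP; exists (tag v); rewrite -eq_v.
Qed.

Definition unrooted_edge a : {set cmp_vert (fun i => (n i).-1)} :=
  if [pick p | [&& p.1 \in f a, p.2 \in f a & cmp_rel p.1 p.2]] is Some p
  then lift_vert model_root @^-1: [set p.1; p.2] else set0.

Lemma unrooted_edgeP a : a \notin rooted ->
  exists x y, unrooted_edge a = [set x; y] /\ cmp_rel x y.
Proof.
move=> aR; rewrite /unrooted_edge; case: pickP => [[v w] /and3P [/= va wa evw] | none].
  have [[x vx] [y wy]] := (unrooted_lift aR va, unrooted_lift aR wa); subst v w.
  exists x, y; split=> //; apply/setP => z.
  by rewrite !inE !(inj_eq (@lift_vert_inj _ _ model_root)).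
have [x [y [xa ya exy]]] := connected_in_edge (@f_connected a) (unrooted_card_gt1 aR).
by have := none (x, y); rewrite /= xa ya exy.
Qed.

Lemma unrooted_edge_sub a : unrooted_edge a \subset lift_vert model_root @^-1: f a.
Proof.
rewrite /unrooted_edge; case: pickP => [[v w] /and3P [/= va wa _] | _]; last exact: sub0set.
by apply/subsetP => x; rewrite !inE => /orP [] /eqP ->.
Qed.

Lemma card_unrooted : #|~: rooted| <= matching_number (@cmp_rel k (fun i => (n i).-1)).
Proof.
apply: card_le_matching_number => [a | a b _ _ neq_ab].
  by rewrite inE; apply: unrooted_edgeP.
apply: disjointWl (unrooted_edge_sub a) _; apply: disjointWr (unrooted_edge_sub b) _.
rewrite -setI_eq0 -preimsetI; apply/eqP.
by move: (f_disjoint neq_ab); rewrite -setI_eq0 => /eqP ->; apply: preimset0.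
Qed.

End ModelBound.

Theorem lemma4 (k : nat) (n : 'I_k -> nat) (hn : forall i, 0 < n i) :
  hadwiger_number (@cmp_rel k n)
    (k + matching_number (@cmp_rel k (fun i => (n i).-1))).
Proof.
split=> [|t [f [f_neq0 f_connected f_disjoint f_adjacent]]].
  have [M matchM <-] := matching_number_attained (@cmp_rel k (fun i => (n i).-1)).
  exact: (matching_model_K_minor (fun i => Ordinal (hn i)) matchM).
rewrite -[t]card_ord -(cardsC (rooted hn f)).
exact: leq_add (card_rooted hn f_disjoint)
  (card_unrooted hn f_neq0 f_connected f_disjoint f_adjacent).
Qed.
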